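(* Let $G$ be a decomposable (chordal) undirected graph on $\{1,\dots,d\}$ whose largest clique has size three, and consider the palindromic Ising model with concentration graph $G$: the set of positive distributions $p$ on $\{0,1\}^d$ that are palindromic, have log-linear interactions $\lambda_b=0$ for all $|b|\ge3$, and have $\lambda_{\{i,j\}}=0$ whenever $\{i,j\}$ is not an edge of $G$. Given a random sample of size $n$ with cell counts $n(a)$, $a\in\{0,1\}^d$, the maximum likelihood estimate of $p$ in this model is obtained in closed form from the marginal correlations of the symmetrized $2\times 2$ tables of the pairs of variables within the 2-node and 3-node cliques of $G$, namely from the cross-sum differences $\hat\xi_{st}=\frac1n\sum_{a}(-1)^{a_s+a_t}n(a)$ for pairs $\{s,t\}$ contained in a clique of $G$.
   Context: Palindromic: $p(a)=p(\sim a)$ for all $a$, where $\sim a$ is the complement of the binary vector $a$. Log-linear interactions: $\lambda_b=2^{-d}\sum_a(-1)^{a\cdot b}\log p(a)$, $|b|=\sum_vb_v$. A clique is a maximal complete subset of nodes. The symmetrized counts are $\hat n(a)=\{n(a)+n(\sim a)\}/2$; the correlation of the $\pm1$-coded variables $(-1)^{A_s},(-1)^{A_t}$ in the symmetrized $2\times2$ marginal table of $(A_s,A_t)$ equals $\hat\xi_{st}$. *)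

From HB Require Import structures.
From mathcomp Require Import all_boot all_order all_algebra.
From mathcomp Require Import reals exp.
Set Implicit Arguments. Unset Strict Implicit. Unset Printing Implicit Defensive.
Import Order.TTheory GRing.Theory Num.Theory.
Local Open Scope ring_scope.

(* Vertices are 'I_d; a cell of the table is a binary vector a in {0,1}^d,
   encoded as a finite function 'I_d -> bool (true = 1). *)
Definition cell (d : nat) := {ffun 'I_d -> bool}.

Definition compl_cell d (a : cell d) : cell d := [ffun v => ~~ a v].

Definition sgnb (R : pzRingType) (b : bool) : R := if b then -1 else 1.

Definition simple_graph d (e : rel 'I_d) := symmetric e /\ irreflexive e.

Definition complete d (e : rel 'I_d) (C : {set 'I_d}) :=
  forall x y, x \in C -> y \in C -> x != y -> e x y.

Definition clique d (e : rel 'I_d) (C : {set 'I_d}) :=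
  complete e C /\ forall D : {set 'I_d}, complete e D -> C \subset D -> D = C.

Definition chordal d (e : rel 'I_d) :=
  forall (k : nat) (v : 'I_k -> 'I_d), (4 <= k)%N -> injective v ->
    (forall i : 'I_k, e (v i) (v (ordS i))) ->
    exists i j : 'I_k, [/\ j != i, j != ordS i, i != ordS j & e (v i) (v j)].

Definition max_clique_size3 d (e : rel 'I_d) :=
  (exists C, clique e C /\ #|C| = 3%N) /\ (forall C, clique e C -> (#|C| <= 3)%N).

Definition history d (cs : seq {set 'I_d}) (j : nat) : {set 'I_d} :=
  \bigcup_(i < j) nth set0 cs i.
Definition separator d (cs : seq {set 'I_d}) (j : nat) : {set 'I_d} :=
  nth set0 cs j :&: history cs j.

Definition perfect_clique_seq d (e : rel 'I_d) (cs : seq {set 'I_d}) :=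
  [/\ uniq cs,
      forall C, C \in cs -> clique e C,
      forall C, clique e C -> C \in cs &
      forall j, (0 < j < size cs)%N ->
        exists2 i, (i < j)%N & separator cs j \subset nth set0 cs i].

Section Model.
Variable R : realType.
Variable d : nat.

Definition palindromic (p : cell d -> R) := forall a, p a = p (compl_cell a).

(* lambda_b = 2^{-d} sum_a (-1)^{a.b} log p(a), with b identified with a subset *)
Definition lambda (p : cell d -> R) (b : {set 'I_d}) : R :=
  (2 ^+ d)^-1 * \sum_(a : cell d) sgnb R (odd #|[set v in b | a v]|) * ln (p a).

Definition is_distr (p : cell d -> R) :=
  (forall a, 0 < p a) /\ \sum_(a : cell d) p a = 1.

Definition pal_ising (e : rel 'I_d) (p : cell d -> R) :=
  [/\ is_distr p, palindromic p,
      forall b : {set 'I_d}, (3 <= #|b|)%N -> lambda p b = 0 &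
      forall i j : 'I_d, i != j -> ~~ e i j -> lambda p [set i; j] = 0].

Definition loglik (n : cell d -> nat) (p : cell d -> R) : R :=
  \sum_(a : cell d) (n a)%:R * ln (p a).

Definition is_unique_mle (e : rel 'I_d) (n : cell d -> nat) (p : cell d -> R) :=
  [/\ pal_ising e p,
      forall q, pal_ising e q -> loglik n q <= loglik n p &
      forall q, pal_ising e q -> loglik n q = loglik n p -> q = p].

Definition ssize (n : cell d -> nat) : nat := \sum_(a : cell d) n a.

Definition xi_hat (n : cell d -> nat) (s t : 'I_d) : R :=
  (ssize n)%:R^-1 * \sum_(a : cell d) sgnb R (a s (+) a t) * (n a)%:R.

(* symmetrized (palindromic) marginal of a set C of at most three nodes,
   determined by the correlations xi_st, s < t in C:
   2^{-|C|} (1 + sum_{s<t in C} (-1)^{a_s+a_t} xi_st) *)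
Definition fmarg (n : cell d -> nat) (C : {set 'I_d}) (a : cell d) : R :=
  (2 ^+ #|C|)^-1 *
  (1 + \sum_(s in C) \sum_(t in C | (s < t)%N) sgnb R (a s (+) a t) * xi_hat n s t).

Definition closed_form (n : cell d -> nat) (cs : seq {set 'I_d}) (a : cell d) : R :=
  (\prod_(j < size cs) fmarg n (nth set0 cs j) a) /
  (\prod_(1 <= j < size cs) fmarg n (separator cs j) a).

End Model.

From HB Require Import structures.
From mathcomp Require Import all_boot all_order all_algebra.
From mathcomp Require Import boolp reals exp.
From mathcomp.algebra_tactics Require Import ring lra.
From mathcomp Require Import zify.
Set Implicit Arguments. Unset Strict Implicit. Unset Printing Implicit Defensive.
Import Order.TTheory GRing.Theory Num.Theory.
Local Open Scope ring_scope.

(* Write functions of a cell in the Walsh basis chi_b(a) = prod_(v in b) (-1)^(a v).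
   For q in the model the Walsh coefficients of ln q vanish outside the empty set
   and the edges of G, and the closed form p is in the model: ln p is a sum of
   functions of single cliques, which have at most three nodes, and its odd
   coefficients vanish by palindromy.  Integrating p against a function of one
   clique telescopes along the perfect sequence (running intersection), so the
   pairwise correlations of p on the edges are the empirical ones.  Hence, by
   Parseval, the residual n - N p is orthogonal to ln q - ln p for every q in the
   model, and loglik q - loglik p = N sum_a p(a) ln (q(a) / p(a)), which by Gibbs'
   inequality is <= 0 with equality only for q = p. *)

Section WalshCharacters.
Variables (R : numFieldType) (d : nat).
Local Notation cell := (cell d).
Implicit Types (b C D T : {set 'I_d}) (a r : cell).

Lemma sgnbN (x : bool) : sgnb R (~~ x) = - sgnb R x.
Proof. by case: x; rewrite /= ?opprK. Qed.

Lemma sgnb_addb (x y : bool) : sgnb R x * sgnb R y = sgnb R (x (+) y).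
Proof. by case: x; case: y; rewrite /= ?mulr1 ?mul1r ?mulrNN ?mulr1. Qed.

Definition chi b a : R := \prod_(v in b) sgnb R (a v).

Lemma sgnb_odd_card b a : sgnb R (odd #|[set v in b | a v]|) = chi b a.
Proof.
have -> : sgnb R (odd #|[set v in b | a v]|) = (-1) ^+ #|[set v in b | a v]|.
  by rewrite -signr_odd; case: odd.
rewrite /chi (eq_bigr (fun v => if a v then -1 else 1)); last by move=> v _; case: (a v).
by rewrite -big_mkcondr -prodr_const; apply: eq_bigl => v; rewrite inE.
Qed.

Lemma chi_pair (s t : 'I_d) a : s != t -> chi [set s; t] a = sgnb R (a s (+) a t).
Proof.
move=> st; have ns : s \notin [set t] by rewrite inE.
by rewrite /chi (big_setU1 _ ns) /= big_set1 sgnb_addb.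
Qed.

Definition flip a (v : 'I_d) : cell := [ffun w => if w == v then ~~ a w else a w].

Lemma flipK v : involutive (flip^~ v).
Proof. by move=> a; apply/ffunP => w; rewrite !ffunE; case: eqP => // _; rewrite negbK. Qed.

Lemma self_opp_eq0 (x : R) : x = - x -> x = 0.
Proof. by move=> /eqP; rewrite -addr_eq0 -mulr2n mulrn_eq0 orFb => /eqP. Qed.

Lemma sum_flip_antisym (F : cell -> R) v :
  (forall a, F (flip a v) = - F a) -> \sum_a F a = 0.
Proof.
move=> FN; apply: self_opp_eq0.
by rewrite {1}(reindex_inj (inv_inj (flipK v))) -sumrN; apply: eq_bigr.
Qed.

Lemma chi_flip b a v : v \in b -> chi b (flip a v) = - chi b a.
Proof.
move=> vb; rewrite /chi !(big_setD1 v vb) /= ffunE eqxx sgnbN mulNr.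
congr (- (_ * _)); apply: eq_bigr => w; rewrite !inE => /andP[/negbTE wv _].
by rewrite ffunE wv.
Qed.

Lemma compl_cellK : involutive (@compl_cell d).
Proof. by move=> a; apply/ffunP => w; rewrite !ffunE negbK. Qed.

Lemma chi_compl_cell b a : chi b (compl_cell a) = (-1) ^+ #|b| * chi b a.
Proof. by rewrite /chi -prodrN; apply: eq_bigr => w _; rewrite ffunE sgnbN. Qed.

Definition depends_on C (F : cell -> R) :=
  forall a a', (forall v, v \in C -> a v = a' v) -> F a = F a'.

Lemma depends_onS C D F : C \subset D -> depends_on C F -> depends_on D F.
Proof. by move=> /subsetP CD FC a a' eq_aa'; apply: FC => v /CD; apply: eq_aa'. Qed.

Lemma depends_onM C F G :
  depends_on C F -> depends_on C G -> depends_on C (fun a => F a * G a).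
Proof. by move=> FC GC a a' eq_aa'; rewrite (FC a a') ?(GC a a'). Qed.

Lemma depends_onV C F : depends_on C F -> depends_on C (fun a => (F a)^-1).
Proof. by move=> FC a a' eq_aa'; rewrite (FC a a'). Qed.

Lemma sum_chi_depends b C F :
  depends_on C F -> ~~ (b \subset C) -> \sum_a chi b a * F a = 0.
Proof.
move=> FC /subsetPn [v vb vC]; apply: (@sum_flip_antisym _ v) => a.
rewrite chi_flip // mulNr; congr (- (_ * _)); apply: FC => w wC.
by rewrite ffunE; case: eqP => // wv; rewrite -wv wC in vC.
Qed.

Lemma sum_chi_palindromic b F :
  (forall a, F (compl_cell a) = F a) -> odd #|b| -> \sum_a chi b a * F a = 0.
Proof.
move=> Fpal ob; apply: self_opp_eq0.
rewrite {1}(reindex_inj (inv_inj compl_cellK)) -sumrN; apply: eq_bigr => a _.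
by rewrite chi_compl_cell Fpal -signr_odd ob mulN1r mulNr.
Qed.

Definition nsubsets : R := #|{set 'I_d}|%:R.

Lemma nsubsets_neq0 : nsubsets != 0.
Proof. by rewrite pnatr_eq0 -lt0n; apply/card_gt0P; exists set0. Qed.

Definition toggle (v : 'I_d) b := if v \in b then b :\ v else v |: b.

Lemma toggleK v : involutive (toggle v).
Proof.
move=> b; rewrite /toggle; case: (boolP (v \in b)) => vb.
  by rewrite !inE eqxx /= setD1K.
by rewrite !inE eqxx /= setU1K.
Qed.

Lemma sum_chi_mul a a' :
  \sum_b chi b a * chi b a' = if a == a' then nsubsets else 0.
Proof.
pose s b := \prod_(w in b) sgnb R (a w (+) a' w).
have -> : \sum_b chi b a * chi b a' = \sum_b s b.
  by apply: eq_bigr => b _; rewrite /chi -big_split; apply: eq_bigr => w _; apply: sgnb_addb.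
case: eqP => [eq_aa'|neq].
  rewrite (eq_bigr (fun _ => 1)) ?sumr_const //.
  by move=> b _; apply: big1 => w _; rewrite eq_aa' addbb.
have [v av] : exists v, a v != a' v.
  apply/existsP; apply: contraT; rewrite negb_exists => /forallP eq_aa'.
  by case: neq; apply/ffunP => w; apply/eqP; rewrite -[_ == _]negbK eq_aa'.
have sv : sgnb R (a v (+) a' v) = -1 by move: av; case: (a v); case: (a' v).
have sN b : s (toggle v b) = - s b.
  rewrite /s /toggle; case: (boolP (v \in b)) => vb.
    by rewrite [in RHS](big_setD1 v vb) /= sv mulN1r opprK.
  by rewrite big_setU1 //= sv mulN1r.
apply: self_opp_eq0.
by rewrite {1}(reindex_inj (inv_inj (toggleK v))) -sumrN; apply: eq_bigr => b _.
Qed.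

Lemma parseval (F G : cell -> R) : \sum_a G a * F a =
  nsubsets^-1 * \sum_b (\sum_a chi b a * F a) * (\sum_a G a * chi b a).
Proof.
under [X in _ * X]eq_bigr do rewrite mulr_suml.
rewrite exchange_big /=.
under [X in _ * X]eq_bigr => a' _.
  rewrite (eq_bigr (fun b => \sum_a (F a' * G a) * (chi b a' * chi b a))); last first.
    by move=> b _; rewrite mulr_sumr; apply: eq_bigr => a _; ring.
  rewrite exchange_big /=.
  under eq_bigr do rewrite -mulr_sumr sum_chi_mul.
  rewrite (bigD1 a') //= eqxx big1 ?addr0; last first.
    by move=> a /negbTE; rewrite eq_sym => ->; rewrite mulr0.
  over.
by rewrite -mulr_suml mulrC mulfK ?nsubsets_neq0 //; apply: eq_bigr => a _; rewrite mulrC.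
Qed.

End WalshCharacters.

Section Marginalization.
Variables (R : numFieldType) (d : nat).
Local Notation cell := (cell d).
Implicit Types (C T : {set 'I_d}) (a r : cell) (F G : cell -> R).

Definition upd T a r : cell := [ffun v => if v \in T then r v else a v].

(* The average of [F] over the coordinates in [T], those outside [T] being read off [a];
   [r] runs over all cells, hence the normalization by [2 ^ d] rather than [2 ^ #|T|]. *)
Definition avg T F a : R := (2 ^+ d)^-1 * \sum_r F (upd T a r).

Lemma upd_in T a r v : v \in T -> upd T a r v = r v.
Proof. by rewrite ffunE => ->. Qed.

Lemma upd_notin T a r v : v \notin T -> upd T a r v = a v.
Proof. by rewrite ffunE => /negbTE ->. Qed.

Lemma two_expr_gt0 : (0 : R) < 2 ^+ d.
Proof. by rewrite exprn_gt0. Qed.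

Lemma two_expr_neq0 : (2 ^+ d : R) != 0.
Proof. by rewrite gt_eqF ?two_expr_gt0. Qed.

Lemma sum_cell_const (c : R) : \sum_(r : cell) c = 2 ^+ d * c.
Proof. by rewrite sumr_const card_ffun card_bool card_ord -[c *+ _]mulr_natl natrX. Qed.

Lemma eq_avg T F G : F =1 G -> avg T F =1 avg T G.
Proof. by move=> eq_FG a; rewrite /avg; under eq_bigr do rewrite eq_FG. Qed.

Lemma sum_upd T (F : cell -> R) : \sum_a \sum_r F (upd T a r) = 2 ^+ d * \sum_a F a.
Proof.
pose swap (p : cell * cell) := (upd T p.1 p.2, upd T p.2 p.1).
have swapK : involutive swap.
  by move=> [a r]; congr (_, _); apply/ffunP => v; rewrite !ffunE; case: (v \in T).
rewrite pair_big /= (reindex_inj (inv_inj swapK)) /=.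
have updK (p : cell * cell) : upd T (upd T p.1 p.2) (upd T p.2 p.1) = p.1.
  by apply/ffunP => v; rewrite !ffunE; case: (v \in T).
under eq_bigr do rewrite updK.
rewrite -(pair_big predT predT (fun a (r : cell) => F a)) mulr_sumr /=.
by apply: eq_bigr => a _; rewrite sum_cell_const.
Qed.

Lemma sum_avg T F : \sum_a avg T F a = \sum_a F a.
Proof. by rewrite -mulr_sumr sum_upd mulKf ?two_expr_neq0. Qed.

Lemma sum_mul_avg T F G : depends_on (~: T) F ->
  \sum_a F a * G a = \sum_a F a * avg T G a.
Proof.
move=> FT; rewrite -[LHS](sum_avg T); apply: eq_bigr => a _.
rewrite /avg !mulr_sumr; apply: eq_bigr => r _; rewrite mulrCA; congr (_ * _).
by apply: FT => v; rewrite inE => vT; rewrite upd_notin.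
Qed.

Lemma avg_depends T C G : depends_on C G -> depends_on (C :\: T) (avg T G).
Proof.
move=> GC a a' eq_aa'; rewrite /avg; congr (_ * _); apply: eq_bigr => r _.
apply: GC => v vC; rewrite !ffunE; case: ifP => // vT.
by apply: eq_aa'; rewrite inE vC vT.
Qed.

Lemma avg_mulr_depends T F G a : depends_on (~: T) F ->
  avg T (fun x => G x * F x) a = avg T G a * F a.
Proof.
move=> FT; rewrite /avg -mulrA mulr_suml; congr (_ * _); apply: eq_bigr => r _.
by congr (_ * _); apply: FT => v; rewrite inE => vT; rewrite upd_notin.
Qed.

Lemma avg_const T (c : R) a : avg T (fun _ => c) a = c.
Proof. by rewrite /avg sum_cell_const mulKf ?two_expr_neq0. Qed.

Lemma avgD T F G a : avg T (fun x => F x + G x) a = avg T F a + avg T G a.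
Proof. by rewrite /avg big_split mulrDr. Qed.

Lemma avg_sum T (I : Type) (s : seq I) (P : pred I) (F : I -> cell -> R) a :
  avg T (fun x => \sum_(i <- s | P i) F i x) a = \sum_(i <- s | P i) avg T (F i) a.
Proof. by rewrite /avg exchange_big mulr_sumr. Qed.

Lemma avgZ T F (c : R) a : avg T (fun x => F x * c) a = avg T F a * c.
Proof. by rewrite /avg -mulr_suml mulrA. Qed.

Lemma avg_gt0 T F a : (forall x, 0 < F x) -> 0 < avg T F a.
Proof.
move=> Fpos; rewrite /avg mulr_gt0 ?invr_gt0 ?two_expr_gt0 //.
rewrite (bigD1 a) //= ltr_pwDl ?Fpos // sumr_ge0 // => r _; exact: ltW.
Qed.

Definition sgn2 (s t : 'I_d) a : R := sgnb R (a s (+) a t).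

Lemma sgn2C s t : sgn2 s t =1 sgn2 t s.
Proof. by move=> a; rewrite /sgn2 addbC. Qed.

Lemma sgn2_depends s t : depends_on [set s; t] (sgn2 s t).
Proof. by move=> a a' eq_aa'; rewrite /sgn2 !eq_aa' // !inE eqxx ?orbT. Qed.

Lemma avg_sgn2_in T s t a : s != t -> s \in T -> avg T (sgn2 s t) a = 0.
Proof.
move=> st sT; rewrite /avg (@sum_flip_antisym _ _ _ s) ?mulr0 // => r; rewrite /sgn2.
have -> : upd T a (flip r s) t = upd T a r t.
  by rewrite !ffunE; case: ifP => // _; rewrite eq_sym (negbTE st).
by rewrite !(upd_in _ _ sT) /flip ffunE eqxx -sgnbN addNb.
Qed.

Lemma avg_sgn2 T s t a : s != t ->
  avg T (sgn2 s t) a = if (s \in T) || (t \in T) then 0 else sgn2 s t a.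
Proof.
move=> st; case: (boolP (s \in T)) => sT /=; first exact: avg_sgn2_in.
case: (boolP (t \in T)) => tT.
  by rewrite (eq_avg _ (sgn2C s t)) avg_sgn2_in // eq_sym.
rewrite /avg (eq_bigr (fun _ => sgn2 s t a)) ?sum_cell_const ?mulKf ?two_expr_neq0 //.
by move=> r _; rewrite /sgn2 !upd_notin.
Qed.

End Marginalization.

Lemma ltn_ord_neq m (s t : 'I_m) : (s < t)%N -> s != t.
Proof. by apply: contraTneq => ->; rewrite ltnn. Qed.

Section CorrelationMarginal.
Variables (R : numFieldType) (d : nat) (k : 'I_d -> 'I_d -> R).
Local Notation cell := (cell d).
Implicit Types (C D T : {set 'I_d}) (a : cell).

Definition cmarg C a : R := 1 + \sum_(s in C) \sum_(t in C | (s < t)%N) sgn2 R s t a * k s t.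

Lemma avg_cmarg T C a : avg T (cmarg C) a = cmarg (C :\: T) a.
Proof.
rewrite /cmarg avgD avg_const avg_sum; congr (1 + _).
rewrite big_mkcond [in RHS]big_mkcond; apply: eq_bigr => s _; rewrite !inE.
case sC: (s \in C); rewrite ?andbF //= avg_sum.
case sT: (s \in T) => /=.
  by apply: big1 => t /andP[_ st]; rewrite avgZ avg_sgn2 ?sT ?mul0r ?ltn_ord_neq.
rewrite big_mkcond [in RHS]big_mkcond; apply: eq_bigr => t _; rewrite !inE.
case: ltngtP => st; rewrite ?andbF //=.
rewrite avgZ avg_sgn2 ?ltn_ord_neq // sT /=.
by case: (t \in T); case: (t \in C); rewrite ?mul0r.
Qed.

Lemma cmarg_depends C : depends_on C (cmarg C).
Proof.
move=> a a' eq_aa'; rewrite /cmarg; congr (1 + _); apply: eq_bigr => s sC.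
by apply: eq_bigr => t /andP[tC _]; rewrite /sgn2 !eq_aa'.
Qed.

Lemma cmarg_compl_cell C a : cmarg C (compl_cell a) = cmarg C a.
Proof.
rewrite /cmarg; congr (1 + _); apply: eq_bigr => s _; apply: eq_bigr => t _.
by rewrite /sgn2 !ffunE addNb addbN negbK.
Qed.

Lemma cmarg0 a : cmarg set0 a = 1.
Proof. by rewrite /cmarg big_set0 addr0. Qed.

Lemma cmarg_gt0S C D :
  D \subset C -> (forall a, 0 < cmarg C a) -> forall a, 0 < cmarg D a.
Proof.
move=> DC Cpos a; have -> : D = C :\: ~: D by rewrite setDE setCK; apply/esym/setIidPr.
by rewrite -avg_cmarg avg_gt0.
Qed.

Lemma cmarg_pair (s t : 'I_d) a : k s t = k t s -> s != t ->
  cmarg [set s; t] a = 1 + sgn2 R s t a * k s t.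
Proof.
wlog st : s t / (s < t)%N => [wlog_st ksym st'|_ _].
  have [st|ts|/val_inj eq_st] := ltngtP s t; first exact: wlog_st.
    by rewrite setUC -/[set t; s] wlog_st ?ltn_ord_neq // sgn2C ksym.
  by rewrite eq_st eqxx in st'.
rewrite /cmarg; congr (1 + _).
have ns : s \notin [set t] by rewrite inE ltn_ord_neq.
rewrite (big_setU1 _ ns) /= big_set1 !big_mkcondr !(big_setU1 _ ns) /= !big_set1.
by rewrite !ltnn st ltnNge ltnW //= add0r !addr0.
Qed.

Lemma sum_cmarg_sgn2 C (s t : 'I_d) : k s t = k t s -> s != t ->
  s \in C -> t \in C -> \sum_a cmarg C a * sgn2 R s t a = 2 ^+ d * k s t.
Proof.
move=> ksym st sC tC.
rewrite (eq_bigr (fun a => sgn2 R s t a * cmarg C a)) => [|a _]; last by rewrite mulrC.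
rewrite (@sum_mul_avg _ _ (~: [set s; t])); last by rewrite setCK; exact: sgn2_depends.
have stC : [set s; t] \subset C by rewrite subUset !sub1set sC tC.
rewrite (eq_bigr (fun a => sgn2 R s t a + k s t)) => [|a _]; last first.
  rewrite avg_cmarg setDE setCK (setIidPr stC) cmarg_pair // mulrDr mulr1 mulrA.
  by rewrite /sgn2 sgnb_addb addbb mul1r.
rewrite big_split /= sum_cell_const -(sum_avg [set s]) big1 ?add0r // => a _.
by rewrite avg_sgn2_in ?set11.
Qed.

End CorrelationMarginal.

Lemma fmargE (R : realType) d (n : cell d -> nat) C a :
  fmarg R n C a = (2 ^+ #|C|)^-1 * cmarg (xi_hat R n) C a.
Proof. by []. Qed.

Section RunningIntersection.
Variables (d : nat) (cs : seq {set 'I_d}).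
Local Notation C j := (nth set0 cs j).
Local Notation S j := (separator cs j).
Local Notation H j := (history cs j).

Lemma history0 : H 0 = set0.
Proof. by rewrite /history big_ord0. Qed.

Lemma historyS j : H j.+1 = H j :|: C j.
Proof. by rewrite /history big_ord_recr. Qed.

Lemma separator0 : S 0 = set0.
Proof. by rewrite /separator history0 setI0. Qed.

Lemma separator_subl j : S j \subset C j.
Proof. exact: subsetIl. Qed.

Lemma separator_subr j : S j \subset H j.
Proof. exact: subsetIr. Qed.

Lemma nth_sub_history i j : (i < j)%N -> C i \subset H j.
Proof. by move=> ij; apply: (bigcup_sup (Ordinal ij)). Qed.

Lemma history_mono i j : (i <= j)%N -> H i \subset H j.
Proof.
move=> ij; apply/subsetP => v /bigcupP[l _ vl].
by apply: subsetP vl; apply: nth_sub_history; apply: leq_trans ij.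
Qed.

Lemma card_history j : #|H j| = (\sum_(i < j) (#|C i| - #|S i|))%N.
Proof.
elim: j => [|j IH]; first by rewrite history0 cards0 big_ord0.
rewrite historyS cardsU big_ord_recr /= -IH /separator setIC addnBA //.
by rewrite subset_leq_card // subsetIl.
Qed.

End RunningIntersection.

Section JunctionTree.
Variables (R : numFieldType) (d : nat) (xi : 'I_d -> 'I_d -> R) (cs : seq {set 'I_d}).
Local Notation cell := (cell d).
Local Notation K := (size cs).
Local Notation C j := (nth set0 cs j).
Local Notation S j := (separator cs j).
Local Notation H j := (history cs j).
Local Notation cm := (cmarg xi).

Hypothesis running_intersection : forall j, (0 < j < K)%N ->
  exists2 i, (i < j)%N & S j \subset C i.
Hypothesis cmarg_nth_gt0 : forall j, (j < K)%N -> forall a, 0 < cm (C j) a.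

Lemma cmarg_separator_gt0 j : (j < K)%N -> forall a, 0 < cm (S j) a.
Proof.
case: j => [|j] jK; first by move=> a; rewrite separator0 cmarg0.
have [i ij SC] := running_intersection (j := j.+1) jK.
by apply: (cmarg_gt0S SC); apply: cmarg_nth_gt0; apply: ltn_trans jK.
Qed.

Definition clique_prod m (a : cell) : R := \prod_(j < m) (cm (C j) a / cm (S j) a).

Lemma clique_prod0 a : clique_prod 0 a = 1.
Proof. by rewrite /clique_prod big_ord0. Qed.

Lemma clique_prodS m a :
  clique_prod m.+1 a = clique_prod m a * (cm (C m) a / cm (S m) a).
Proof. by rewrite /clique_prod big_ord_recr. Qed.

Lemma clique_prod_depends m : depends_on (H m) (clique_prod m).
Proof.
move=> a a' eq_aa'; apply: eq_bigr => j _; have CH := nth_sub_history cs (ltn_ord j).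
congr (_ / _); first exact: (depends_onS CH (@cmarg_depends _ _ xi _) eq_aa').
exact: (depends_onS (subset_trans (separator_subl _ _) CH) (@cmarg_depends _ _ xi _) eq_aa').
Qed.

(* Averaging out the variables outside the history turns [C m] into [S m]. *)
Lemma sum_clique_prodS m (phi : cell -> R) : (m < K)%N -> depends_on (H m) phi ->
  \sum_a clique_prod m.+1 a * phi a = \sum_a clique_prod m a * phi a.
Proof.
move=> mK phiH.
have Spos := cmarg_separator_gt0 mK.
have gH : depends_on (~: ~: H m) (fun a => phi a * (cm (S m) a)^-1).
  rewrite setCK; apply: depends_onM phiH (depends_onV _).
  exact: (depends_onS (separator_subr _ _) (@cmarg_depends _ _ xi _)).
transitivity (\sum_a clique_prod m a * (cm (C m) a * (phi a * (cm (S m) a)^-1))).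
  by apply: eq_bigr => a _; rewrite clique_prodS; ring.
rewrite (@sum_mul_avg _ _ (~: H m)); last by rewrite setCK; apply: clique_prod_depends.
apply: eq_bigr => a _; rewrite avg_mulr_depends // avg_cmarg setDE setCK -/(S m).
by congr (_ * _); rewrite mulrCA mulfV ?mulr1 ?gt_eqF.
Qed.

Lemma sum_clique_prod_from m j (phi : cell -> R) : (m <= j <= K)%N ->
  depends_on (H m) phi -> \sum_a clique_prod j a * phi a = \sum_a clique_prod m a * phi a.
Proof.
move=> /andP[mj jK] phiH; elim: j mj jK => [|j IH]; first by rewrite leqn0 => /eqP->.
rewrite leq_eqVlt ltnS => /orP[/eqP<- //|mj] jK.
rewrite sum_clique_prodS ?IH ?(ltnW jK) //.
exact: (depends_onS (history_mono cs mj) phiH).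
Qed.

Lemma sum_clique_prod_nth m (phi : cell -> R) : (m < K)%N -> depends_on (C m) phi ->
  \sum_a clique_prod m.+1 a * phi a = \sum_a cm (C m) a * phi a.
Proof.
elim/ltn_ind: m phi => m IH phi mK phiC.
have Spos := cmarg_separator_gt0 mK.
(* The separator lies inside an earlier clique, where the induction hypothesis applies. *)
have margS g : depends_on (S m) g ->
    \sum_a clique_prod m a * g a = \sum_a cm (S m) a * g a.
  move: IH mK {phiC Spos}; case: m => [|m] IH mK gS.
    by apply: eq_bigr => a _; rewrite clique_prod0 separator0 cmarg0.
  have [i im SC] := running_intersection (j := m.+1) mK.
  rewrite (@sum_clique_prod_from i.+1) ?im ?(ltnW mK) //; last first.
    exact: (depends_onS (subset_trans SC (nth_sub_history cs (ltnSn i))) gS).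
  rewrite IH ?(ltn_trans im mK) //; last exact: (depends_onS SC gS).
  rewrite (eq_bigr (fun a => g a * cm (C i) a)) => [|a _]; last by rewrite mulrC.
  rewrite (@sum_mul_avg _ _ (~: S m.+1) g); last by rewrite setCK.
  by apply: eq_bigr => a _; rewrite avg_cmarg setDE setCK (setIidPr SC) mulrC.
pose psi a := avg (~: H m) (fun x => cm (C m) x * phi x) a / cm (S m) a.
have psiS : depends_on (S m) psi.
  apply: depends_onM; last exact: (depends_onV (@cmarg_depends _ _ xi _)).
  have -> : S m = C m :\: ~: H m by rewrite setDE setCK.
  exact: (avg_depends (depends_onM (@cmarg_depends _ _ xi _) phiC)).
transitivity (\sum_a clique_prod m a * psi a).
  rewrite (eq_bigr (fun a => clique_prod m a * (cm (C m) a * phi a / cm (S m) a))); last first.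
    by move=> a _; rewrite clique_prodS; ring.
  rewrite [LHS](@sum_mul_avg _ _ (~: H m)); last by rewrite setCK; apply: clique_prod_depends.
  apply: eq_bigr => a _; rewrite avg_mulr_depends //; rewrite setCK.
  exact: (depends_onV (depends_onS (separator_subr _ _) (@cmarg_depends _ _ xi _))).
rewrite margS // -[RHS](sum_avg (~: H m)); apply: eq_bigr => a _.
by rewrite /psi mulrCA mulfV ?mulr1 ?gt_eqF.
Qed.

Lemma sum_clique_prod_clique m (phi : cell -> R) : (m < K)%N -> depends_on (C m) phi ->
  \sum_a clique_prod K a * phi a = \sum_a cm (C m) a * phi a.
Proof.
move=> mK phiC; rewrite (@sum_clique_prod_from m.+1) ?mK ?leqnn ?sum_clique_prod_nth //.
exact: (depends_onS (nth_sub_history cs (ltnSn m)) phiC).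
Qed.

End JunctionTree.

Section Gibbs.
Variable R : realType.

Lemma ln_le_subr1 (x : R) : 0 < x -> ln x <= x - 1.
Proof. by move=> x0; have := expR_ge1Dx (ln x); rewrite lnK ?posrE // => ?; lra. Qed.

Lemma ln_lt_subr1 (x : R) : 0 < x -> x != 1 -> ln x < x - 1.
Proof.
move=> x0 x1; have /expR_gt1Dx : ln x != 0 by rewrite ln_eq0.
by rewrite lnK ?posrE // => ?; lra.
Qed.

Lemma mul_ln_sub_le (p q : R) : 0 < p -> 0 < q -> p * (ln q - ln p) <= q - p.
Proof.
move=> p0 q0; rewrite -ln_div ?posrE //.
rewrite (le_trans (ler_wpM2l (ltW p0) (ln_le_subr1 (divr_gt0 q0 p0)))) //.
by rewrite mulrBr mulr1 mulrCA mulfV ?gt_eqF ?mulr1.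
Qed.

Lemma mul_ln_sub_lt (p q : R) : 0 < p -> 0 < q -> q != p -> p * (ln q - ln p) < q - p.
Proof.
move=> p0 q0 qp; have qp1 : q / p != 1.
  by apply: contra qp => /eqP/divr1_eq ->.
rewrite -ln_div ?posrE //.
rewrite (lt_le_trans (_ : _ < p * (q / p - 1))) ?ltr_pM2l ?ln_lt_subr1 ?divr_gt0 //.
by rewrite mulrBr mulr1 mulrCA mulfV ?gt_eqF ?mulr1.
Qed.

Variables (T : finType) (p q : T -> R).
Hypotheses (p_gt0 : forall x, 0 < p x) (q_gt0 : forall x, 0 < q x).
Hypothesis sum_qp : \sum_x q x = \sum_x p x.

Lemma gibbs_le : \sum_x p x * (ln (q x) - ln (p x)) <= 0.
Proof.
apply: le_trans (ler_sum _ (fun x _ => mul_ln_sub_le (p_gt0 x) (q_gt0 x))) _.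
by rewrite sumrB sum_qp subrr.
Qed.

Lemma gibbs_eq0 : \sum_x p x * (ln (q x) - ln (p x)) = 0 -> q =1 p.
Proof.
move=> sum0 x; apply/eqP; apply: contraT => qp.
have gap_ge0 y : true -> 0 <= (q y - p y) - p y * (ln (q y) - ln (p y)).
  by rewrite subr_ge0 mul_ln_sub_le.
have gap0 : \sum_y ((q y - p y) - p y * (ln (q y) - ln (p y))) = 0.
  by rewrite sumrB sum0 subr0 sumrB sum_qp subrr.
move/eqP: (psumr_eq0P gap_ge0 gap0 (i := x) isT); rewrite subr_eq0 => /eqP eq_x.
by move: (mul_ln_sub_lt (p_gt0 x) (q_gt0 x) qp); rewrite eq_x ltxx.
Qed.

End Gibbs.

Section MaximumLikelihood.
Variables (R : realType) (d : nat) (e : rel 'I_d) (n : cell d -> nat) (p : cell d -> R).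
Local Notation N := ((ssize n)%:R : R).

Lemma loglik_subE (q : cell d -> R) : loglik n q - loglik n p =
  \sum_a ((n a)%:R - N * p a) * (ln (q a) - ln (p a)) +
  N * \sum_a p a * (ln (q a) - ln (p a)).
Proof.
rewrite /loglik -sumrB mulr_sumr -big_split /=.
by apply: eq_bigr => a _; ring.
Qed.

Lemma is_unique_mle_orth : (0 < ssize n)%N -> pal_ising e p ->
  (forall q, pal_ising e q ->
     \sum_a ((n a)%:R - N * p a) * (ln (q a) - ln (p a)) = 0) ->
  is_unique_mle e n p.
Proof.
move=> n_gt0 p_model orth; have N_gt0 : 0 < N by rewrite ltr0n.
have [[p_gt0 sum_p] _ _ _] := p_model.
have gap q : pal_ising e q -> loglik n q - loglik n p = N * \sum_a p a * (ln (q a) - ln (p a)).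
  by move=> q_model; rewrite loglik_subE orth // add0r.
split=> // q q_model; have [[q_gt0 sum_q] _ _ _] := q_model.
  by rewrite -subr_le0 gap // pmulr_rle0 // gibbs_le // sum_q sum_p.
move=> /eqP; rewrite -subr_eq0 gap // mulf_eq0 gt_eqF //= => /eqP sum0.
by apply/funext; apply: gibbs_eq0 => //; rewrite sum_q sum_p.
Qed.

End MaximumLikelihood.

Section Cliques.
Variables (d : nat) (e : rel 'I_d).

Lemma completeP D :
  reflect (complete e D) [forall x, forall y, [==> x \in D, y \in D, x != y => e x y]].
Proof.
apply: (iffP forallP) => [De x y xD yD xy|De x].
  by move/forallP: (De x) => /(_ y); rewrite xD yD xy.
by apply/forallP => y; apply/implyP => xD; apply/implyP => yD; apply/implyP; apply: De.
Qed.

Lemma complete_sub_clique D : complete e D -> exists C, clique e C /\ D \subset C.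
Proof.
move=> /completeP De.
have [C /andP[/completeP Ce DC] Cmax] := @arg_maxnP _ D
  (fun X => [forall x, forall y, [==> x \in X, y \in X, x != y => e x y]] && (D \subset X))
  (fun X => #|X|) (introT andP (conj De (subxx D))).
exists C; split=> //; split=> // D' D'e CD'; apply/eqP; rewrite eq_sym eqEcard CD' /=.
by apply: Cmax; rewrite (subset_trans DC CD') andbT; apply/completeP.
Qed.

Lemma complete1 v : complete e [set v].
Proof. by move=> x y; rewrite !inE => /eqP-> /eqP->; rewrite eqxx. Qed.

Lemma complete2 s t : symmetric e -> e s t -> complete e [set s; t].
Proof.
move=> e_sym est x y; rewrite !inE.
by move=> /orP[]/eqP-> /orP[]/eqP->; rewrite ?eqxx // e_sym.
Qed.

Variable cs : seq {set 'I_d}.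
Hypothesis cs_perfect : perfect_clique_seq e cs.
Local Notation K := (size cs).
Local Notation C j := (nth set0 cs j).
Local Notation S j := (separator cs j).

Lemma clique_nth j : (j < K)%N -> clique e (C j).
Proof. by case: cs_perfect => _ cs_clique _ _ jK; apply/cs_clique/mem_nth. Qed.

Lemma complete_sub_nth D : complete e D -> exists2 m, (m < K)%N & D \subset C m.
Proof.
move=> /complete_sub_clique[C [Ce DC]]; case: cs_perfect => _ _ /(_ C Ce) Ccs _.
by exists (index C cs); rewrite ?index_mem ?nth_index.
Qed.

Lemma history_size : history cs K = setT.
Proof.
apply/setP => v; rewrite inE; have [m mK vC] := complete_sub_nth (complete1 (v := v)).
by apply/(subsetP (nth_sub_history cs mK))/(subsetP vC); rewrite set11.
Qed.

Lemma sum_card_nth_separator : (\sum_(j < K) (#|C j| - #|S j|))%N = d.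
Proof. by rewrite -card_history history_size cardsT card_ord. Qed.

End Cliques.

Lemma ln_prod (R : realType) (I : Type) (s : seq I) (P : pred I) (F : I -> R) :
  (forall i, P i -> 0 < F i) -> ln (\prod_(i <- s | P i) F i) = \sum_(i <- s | P i) ln (F i).
Proof.
move=> F_gt0; elim: s => [|i s IH]; first by rewrite !big_nil ln1.
rewrite !big_cons; case: ifP => // Pi.
by rewrite lnM ?posrE ?IH ?F_gt0 ?prodr_gt0.
Qed.

Section ModelSupport.
Variables (R : realType) (d : nat) (e : rel 'I_d).

Lemma lambdaE (q : cell d -> R) b : lambda q b = (2 ^+ d)^-1 * \sum_a chi R b a * ln (q a).
Proof. by rewrite /lambda; congr (_ * _); apply: eq_bigr => a _; rewrite sgnb_odd_card. Qed.

Lemma lambda_eq0 (q : cell d -> R) b :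
  (lambda q b == 0) = (\sum_a chi R b a * ln (q a) == 0).
Proof. by rewrite lambdaE mulf_eq0 invr_eq0 (negbTE (two_expr_neq0 R d)). Qed.

Lemma pal_ising_chi_ln (q : cell d -> R) b : pal_ising e q ->
  \sum_a chi R b a * ln (q a) != 0 ->
  b = set0 \/ exists s t, [/\ s != t, e s t & b = [set s; t]].
Proof.
case=> _ q_pal q_ge3 q_nonedge; rewrite -lambda_eq0.
have [/cards0_eq b0|b_neq0] := eqVneq #|b| 0%N; first by left.
have [b1|b_neq1] := eqVneq #|b| 1%N.
  by rewrite lambda_eq0 sum_chi_palindromic ?b1 ?eqxx // => a; rewrite -q_pal.
have [/eqP/cards2P[s [t [st ->]]]|b_neq2] := eqVneq #|b| 2%N.
  by case: (boolP (e s t)) => est; [right; exists s, t | rewrite q_nonedge ?eqxx].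
by rewrite q_ge3 ?eqxx //; move: b_neq0 b_neq1 b_neq2; lia.
Qed.

End ModelSupport.

Section ClosedForm.
Variables (R : realType) (d : nat) (e : rel 'I_d) (n : cell d -> nat) (cs : seq {set 'I_d}).
Hypotheses (e_simple : simple_graph e) (cs_perfect : perfect_clique_seq e cs).
Hypothesis n_gt0 : (0 < ssize n)%N.
Hypothesis fmarg_gt0 : forall C, clique e C -> forall a, 0 < fmarg R n C a.
Hypothesis e_max3 : max_clique_size3 e.

Local Notation cell := (cell d).
Local Notation xi := (xi_hat R n).
Local Notation K := (size cs).
Local Notation C j := (nth set0 cs j).
Local Notation S j := (separator cs j).
Local Notation cm := (cmarg xi).
Local Notation p := (closed_form R n cs).
Local Notation N := ((ssize n)%:R : R).

Lemma size_cs_gt0 : (0 < K)%N.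
Proof.
case: e_max3 => [[D [De _]] _]; have [m mK _] := complete_sub_nth cs_perfect De.1.
exact: leq_ltn_trans mK.
Qed.

Lemma cmarg_nth_gt0 j : (j < K)%N -> forall a, 0 < cm (C j) a.
Proof.
move=> jK a; have := fmarg_gt0 (clique_nth cs_perfect jK) a.
by rewrite fmargE pmulr_rgt0 // invr_gt0 exprn_gt0.
Qed.

Lemma running_intersection j : (0 < j < K)%N -> exists2 i, (i < j)%N & S j \subset C i.
Proof. by case: cs_perfect => _ _ _; apply. Qed.

Local Notation cmarg_separator_gt0 :=
  (cmarg_separator_gt0 running_intersection cmarg_nth_gt0).

Lemma clique_prod_gt0 a : 0 < clique_prod xi cs K a.
Proof.
by apply: prodr_gt0 => j _; rewrite divr_gt0 ?cmarg_nth_gt0 ?cmarg_separator_gt0.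
Qed.

Lemma closed_formE a : p a = (2 ^+ d)^-1 * clique_prod xi cs K a.
Proof.
rewrite /closed_form.
have -> : \prod_(1 <= j < K) fmarg R n (S j) a = \prod_(j < K) fmarg R n (S j) a.
  rewrite -(big_mkord predT (fun j => fmarg R n (S j) a)) (big_ltn size_cs_gt0).
  by rewrite fmargE separator0 cards0 cmarg0 invr1 mulr1 mul1r.
rewrite -prodf_div (eq_bigr (fun j : 'I_K =>
  (2 ^+ (#|C j| - #|S j|))^-1 * (cm (C j) a / cm (S j) a))) => [|j _].
  by rewrite big_split /= prodfV prodrXr (sum_card_nth_separator cs_perfect).
have SC := subset_leq_card (separator_subl cs j).
have Sj_neq0 := gt_eqF (cmarg_separator_gt0 (ltn_ord j) a).
rewrite !fmargE -{1}(subnK SC) exprD; field.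
by rewrite Sj_neq0 !expf_neq0 // pnatr_eq0.
Qed.

Lemma closed_form_gt0 a : 0 < p a.
Proof. by rewrite closed_formE mulr_gt0 ?invr_gt0 ?two_expr_gt0 ?clique_prod_gt0. Qed.

Lemma xi_hatC s t : xi s t = xi t s.
Proof. by rewrite /xi_hat; congr (_ * _); apply: eq_bigr => a _; rewrite addbC. Qed.

Lemma closed_form_sum_sgn2 s t : s != t -> e s t -> \sum_a p a * sgn2 R s t a = xi s t.
Proof.
move=> st est; have [m mK stC] := complete_sub_nth cs_perfect (complete2 e_simple.1 est).
have sC : s \in C m by apply: (subsetP stC); rewrite !inE eqxx.
have tC : t \in C m by apply: (subsetP stC); rewrite !inE eqxx orbT.
under eq_bigr do rewrite closed_formE -mulrA.
rewrite -[LHS]mulr_sumr (sum_clique_prod_clique running_intersection cmarg_nth_gt0 mK).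
  by rewrite sum_cmarg_sgn2 ?mulKf ?two_expr_neq0 // xi_hatC.
exact: (depends_onS stC (@sgn2_depends _ _ s t)).
Qed.

Lemma closed_form_sum : \sum_a p a = 1.
Proof.
under eq_bigr do rewrite closed_formE -[clique_prod _ _ _ _]mulr1.
rewrite -[LHS]mulr_sumr.
rewrite (sum_clique_prod_clique running_intersection cmarg_nth_gt0 size_cs_gt0) //.
under eq_bigr do rewrite mulr1.
rewrite -(sum_avg setT) (eq_bigr (fun _ => 1)) => [|a _]; last first.
  by rewrite avg_cmarg setDT cmarg0.
by rewrite sum_cell_const mulr1 mulVf ?two_expr_neq0.
Qed.

Lemma closed_form_palindromic : palindromic p.
Proof.
move=> a; rewrite !closed_formE; congr (_ * _).
by apply: eq_bigr => j _; rewrite !cmarg_compl_cell.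
Qed.

Lemma ln_closed_form a : ln (p a) =
  ln ((2 ^+ d)^-1) + \sum_(j < K) (ln (cm (C j) a) - ln (cm (S j) a)).
Proof.
have [Cpos Spos] := (cmarg_nth_gt0, cmarg_separator_gt0).
rewrite closed_formE lnM ?posrE ?invr_gt0 ?two_expr_gt0 ?clique_prod_gt0 //; congr (_ + _).
rewrite /clique_prod ln_prod => [|j _]; last by rewrite divr_gt0 ?Cpos ?Spos.
by apply: eq_bigr => j _; rewrite ln_div ?posrE ?Cpos ?Spos.
Qed.

Lemma sum_chi_ln_closed_form (b : {set 'I_d}) :
  (forall j, (j < K)%N -> ~~ (b \subset C j)) -> \sum_a chi R b a * ln (p a) = 0.
Proof.
move=> b_notin; have b_neq0 : ~~ (b \subset set0).
  by apply: contra (b_notin 0 size_cs_gt0) => /subset_trans; apply; apply: sub0set.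
under eq_bigr do rewrite ln_closed_form mulrDr mulr_sumr.
rewrite big_split /= (sum_chi_depends (C := set0)) // add0r exchange_big /= big1 // => j _.
under eq_bigr do rewrite mulrBr.
have b_notinS : ~~ (b \subset S j).
  by apply: contra (b_notin j (ltn_ord j)) => /subset_trans; apply; apply: separator_subl.
rewrite sumrB (sum_chi_depends (C := C j)) ?b_notin //; last first.
  by move=> a a' /(cmarg_depends xi) ->.
by rewrite (sum_chi_depends (C := S j)) ?subrr // => a a' /(cmarg_depends xi) ->.
Qed.

Lemma closed_form_pal_ising : pal_ising e p.
Proof.
have [_ clique_le3] := e_max3.
split.
- by split; [apply: closed_form_gt0 | apply: closed_form_sum].
- exact: closed_form_palindromic.
- move=> b b_ge3; apply/eqP; rewrite lambda_eq0; apply/eqP.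
  have [b_odd|b_even] := boolP (odd #|b|).
    apply: (sum_chi_palindromic (F := fun a => ln (p a))) => // a.
    by rewrite [in RHS]closed_form_palindromic.
  apply: sum_chi_ln_closed_form => j jK; apply/negP => /subset_leq_card.
  have := clique_le3 _ (clique_nth cs_perfect jK); move: b_ge3 b_even; lia.
- move=> s t st est; apply/eqP; rewrite lambda_eq0; apply/eqP.
  apply: sum_chi_ln_closed_form => j jK; apply/negP => stC.
  have [C_complete _] := clique_nth cs_perfect jK.
  by move: est; rewrite C_complete // (subsetP stC) // !inE eqxx ?orbT.
Qed.

Lemma sum_residual_chi (b : {set 'I_d}) :
  (b = set0 \/ exists s t, [/\ s != t, e s t & b = [set s; t]]) ->
  \sum_a ((n a)%:R - N * p a) * chi R b a = 0.
Proof.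
case=> [->|[s [t [st est ->]]]].
  under eq_bigr do rewrite /chi big_set0 mulr1.
  by rewrite sumrB -natr_sum -mulr_sumr closed_form_sum mulr1 subrr.
under eq_bigr do rewrite chi_pair // mulrBl -mulrA.
rewrite sumrB -mulr_sumr closed_form_sum_sgn2 // /xi_hat mulrA.
rewrite mulfV ?mul1r ?pnatr_eq0 -?lt0n //.
by apply/eqP; rewrite subr_eq0; apply/eqP/eq_bigr => a _; rewrite mulrC.
Qed.

Lemma sum_residual_ln (q : cell -> R) : pal_ising e q ->
  \sum_a ((n a)%:R - N * p a) * (ln (q a) - ln (p a)) = 0.
Proof.
move=> q_model; rewrite parseval big1 ?mulr0 // => b _.
have [->|coef_neq0] := eqVneq (\sum_a chi R b a * (ln (q a) - ln (p a))) 0.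
  by rewrite mul0r.
rewrite sum_residual_chi ?mulr0 //; move: coef_neq0.
under eq_bigr do rewrite mulrBr.
rewrite sumrB; have [->|] := eqVneq (\sum_a chi R b a * ln (q a)) 0.
  by rewrite sub0r oppr_eq0; apply: pal_ising_chi_ln closed_form_pal_ising.
by move=> q_coef _; apply: pal_ising_chi_ln q_model q_coef.
Qed.

End ClosedForm.

Theorem proposition5p3 (R : realType) (d : nat) (e : rel 'I_d)
    (n : cell d -> nat) (cs : seq {set 'I_d}) :
  simple_graph e -> chordal e -> max_clique_size3 e ->
  perfect_clique_seq e cs ->
  (0 < ssize n)%N ->
  (forall C, clique e C -> forall a, 0 < fmarg R n C a) ->
  is_unique_mle e n (fun a => closed_form R n cs a).
Proof.
move=> e_simple _ e_max3 cs_perfect n_gt0 fmarg_gt0.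
apply: is_unique_mle_orth => //.
  exact: closed_form_pal_ising.
by move=> q; apply: sum_residual_ln.
Qed.
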